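(* Let $f,g\colon X\to Y$ be morphisms in $\mathbf{CompOrd}$ having a common retraction $k\colon Y\to X$ (i.e. $k\circ f=k\circ g=1_X$), let $h\colon E\to X$ be an equalizer of $f$ and $g$ in $\mathbf{CompOrd}$, and let $K$ be a closed subset of $X$. Then: (1) if $\uparrow f[K]=\uparrow g[K]$, then $\uparrow K=\uparrow(K\cap\operatorname{im}h)$; (2) if $\downarrow f[K]=\downarrow g[K]$, then $\downarrow K=\downarrow(K\cap\operatorname{im}h)$; (3) if $\updownarrow f[K]=\updownarrow g[K]$, then $\updownarrow K=\updownarrow(K\cap\operatorname{im}h)$.
   Context: $\mathbf{CompOrd}$ is the category of compact ordered spaces (compact Hausdorff spaces with a partial order closed in $X\times X$) and continuous order-preserving maps. For a subset $Y$ of a poset, $\uparrow Y$, $\downarrow Y$ denote up- and down-closure and $\updownarrow Y=\uparrow Y\cap\downarrow Y$. *)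

From HB Require Import structures.
From mathcomp Require Import all_boot all_order.
From mathcomp Require Import all_classical topology.
Set Implicit Arguments. Unset Strict Implicit. Unset Printing Implicit Defensive.
Local Open Scope classical_set_scope.

Record isCompOrd (T : topologicalType) (le : T -> T -> Prop) : Prop := {
  co_refl : forall x, le x x;
  co_antisym : forall x y, le x y -> le y x -> x = y;
  co_trans : forall x y z, le x y -> le y z -> le x z;
  co_closed : closed [set p : T * T | le p.1 p.2];
  co_compact : compact [set: T];
  co_hausdorff : hausdorff_space T }.

Record compOrd := CompOrd {
  co_sort :> topologicalType;
  co_le : co_sort -> co_sort -> Prop;
  co_ax : isCompOrd co_le }.

Definition co_mor (X Y : compOrd) (f : X -> Y) : Prop :=
  continuous f /\ forall x y : X, co_le x y -> co_le (f x) (f y).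

Definition upc (X : compOrd) (A : set X) : set X :=
  [set y | exists2 x, A x & co_le x y].
Definition downc (X : compOrd) (A : set X) : set X :=
  [set y | exists2 x, A x & co_le y x].
Definition updownc (X : compOrd) (A : set X) : set X := upc A `&` downc A.

Definition is_equalizer (X Y E : compOrd) (f g : X -> Y) (h : E -> X) : Prop :=
  co_mor h /\ f \o h = g \o h /\
  forall (Z : compOrd) (u : Z -> X), co_mor u -> f \o u = g \o u ->
    exists! v : Z -> E, co_mor v /\ h \o v = u.

From mathcomp Require Import all_boot all_order.
From mathcomp Require Import all_classical topology.
Local Open Scope classical_set_scope.
Set Implicit Arguments. Unset Strict Implicit.

(* Let m be a minimal element of the closed set K (one lies below every point
   of K, by Zorn's lemma and compactness).  If f[K] <= up g[K], then g c <= f m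
   for some c in K; applying the monotone common retraction k gives c <= m,
   hence c = m by minimality and g m <= f m.  The symmetric hypothesis gives
   f m <= g m, so m lies in the equalizer set {x | f x = g x}, which is the
   image of the CompOrd-equalizer h.  Hence every point of up K lies above a
   point of K /\ im h, which is part (1).

   The down-closure statement is
   the same statement for the order-dual space [dual X]; part (3) combines
   the two.  Finally the image of an equalizer is identified with the
   equalizer set. *)

Lemma directed_closed_meet (T : topologicalType) (I : Type) (D : set I)
    (B : I -> set T) :
  compact [set: T] -> D !=set0 ->
  (forall i, D i -> closed (B i)) -> (forall i, D i -> B i !=set0) ->
  (forall i j, D i -> D j -> exists2 l, D l & B l `<=` B i `&` B j) ->
  exists p, forall i, D i -> B i p.
Proof.
move=> cpt D0 clB B0 dirB.
have FF : ProperFilter (filter_from D B).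
  by apply: filter_from_proper => //; apply: filter_from_filter.
have [p [_ clp]] := cpt _ FF filterT.
exists p => i Di; apply: (clB i Di) => U Up.
by apply: clp Up; exists i.
Qed.

Lemma closed_downset (X : compOrd) (c : X) : closed [set z | co_le z c].
Proof.
have -> : [set z | co_le z c] =
    (fun z => (z, c)) @^-1` [set p : X * X | co_le p.1 p.2] by [].
apply: (proj1 (continuous_closedP _) _ _ (co_closed (co_ax X))) => z.
by apply: cvg_pair => //; apply: cvg_cst.
Qed.

Lemma exists_minimal_below (X : compOrd) (K : set X) (x : X) :
  closed K -> K x ->
  exists2 m, K m /\ co_le m x & forall y, K y -> co_le y m -> y = m.
Proof.
move=> clK Kx; have ax := co_ax X.
pose S := {y : X | K y /\ co_le y x}.
(* [above a b] : the point b of S lies below a, the order we maximize. *)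
pose above (a b : S) := `[< co_le (sval b) (sval a) >].
have [||||t tmax] := @Zorn S above.
- by move=> a; apply/asboolP; exact: (co_refl ax).
- move=> a b c /asboolP ab /asboolP bc; apply/asboolP; exact: (co_trans ax) bc ab.
- move=> [a Sa] [b Sb] /asboolP /= ab /asboolP /= ba.
  have eab : a = b by exact: (co_antisym ax).
  by subst b; congr exist; exact: Prop_irrelevance.
- move=> A Achain; have [A0|] := pselect (A !=set0); last first.
    move=> A0; exists (exist _ x (conj Kx (co_refl ax x))) => s As.
    by exfalso; apply: A0; exists s.
  have [|||p Ap] := @directed_closed_meet X S A
      (fun s => K `&` [set z | co_le z (sval s)]) (co_compact ax) A0.
  + by move=> s _; apply: closedI => //; exact: closed_downset.
  + move=> s _; exists (sval s); split; first exact: (proj1 (svalP s)).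
    exact: (co_refl ax).
  + move=> i j Ai Aj; have [/asboolP ij|/asboolP ji] := Achain i j Ai Aj.
      by exists j => // z [Kz zj]; do 2 split => //; exact: (co_trans ax) zj ij.
    by exists i => // z [Kz zi]; do 2 split => //; exact: (co_trans ax) zi ji.
  have [a0 A0a0] := A0; have [Kp pa0] := Ap a0 A0a0.
  have Sp : K p /\ co_le p x.
    by split => //; exact: (co_trans ax) pa0 (proj2 (svalP a0)).
  by exists (exist _ p Sp) => s As; apply/asboolP; exact: (proj2 (Ap s As)).
exists (sval t); first exact: (svalP t).
move=> y Ky yt.
have Sy : K y /\ co_le y x by split => //; exact: (co_trans ax) yt (proj2 (svalP t)).
by have := tmax (exist _ y Sy) (asboolT yt) => <-.
Qed.

Lemma dual_isCompOrd (X : compOrd) : isCompOrd (fun x y : X => co_le y x).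
Proof.
have ax := co_ax X; split.
- exact: (co_refl ax).
- by move=> x y yx xy; exact: (co_antisym ax).
- by move=> x y z yx zy; exact: (co_trans ax zy yx).
- have -> : [set p : X * X | co_le p.2 p.1] =
      (fun p : X * X => (p.2, p.1)) @^-1` [set p | co_le p.1 p.2] by [].
  apply: (proj1 (continuous_closedP _) _ _ (co_closed ax)).
  exact: swap_continuous.
- exact: (co_compact ax).
- exact: (co_hausdorff ax).
Qed.

(* Down-closures in X are, by definition, up-closures in [dual X]; this is
   how the down-closure statements below are reduced to up-closure ones. *)
Definition dual (X : compOrd) : compOrd := CompOrd (dual_isCompOrd X).

Lemma sub_upc (X : compOrd) (A : set X) : A `<=` upc A.
Proof. by move=> x Ax; exists x => //; exact: (co_refl (co_ax X)). Qed.

Lemma sub_downc (X : compOrd) (A : set X) : A `<=` downc A.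
Proof. exact: (@sub_upc (dual X)). Qed.

Lemma upcS (X : compOrd) (A B : set X) : A `<=` B -> upc A `<=` upc B.
Proof. by move=> AB y [x Ax xy]; exists x => //; exact: AB. Qed.

Lemma updownc_eq_sub (X : compOrd) (A B : set X) :
  updownc A = updownc B -> A `<=` upc B /\ A `<=` downc B.
Proof.
move=> AB; have AsubB : A `<=` updownc B.
  by rewrite -AB => x Ax; split; [exact: sub_upc|exact: sub_downc].
by split=> x /AsubB [].
Qed.

Section MonotoneRetraction.
Variables (X Y : compOrd) (k : Y -> X).
Hypothesis k_mono : forall y y', co_le y y' -> co_le (k y) (k y').

(* At a minimal point m of K, the hypothesis f[K] <= up g[K] forces
   g m <= f m: a witness g c <= f m retracts to c <= m, so c = m. *)
Lemma minimal_image_le (f g : X -> Y) (K : set X) (m : X) :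
  cancel f k -> cancel g k ->
  K m -> (forall y, K y -> co_le y m -> y = m) ->
  f @` K `<=` upc (g @` K) -> co_le (g m) (f m).
Proof.
move=> fK gK Km m_min fgK.
have [_ [c Kc <-] gcfm] := fgK _ (ex_intro2 _ _ m Km erefl).
have cm : co_le c m by have := k_mono gcfm; rewrite fK gK.
by move: gcfm; rewrite (m_min c Kc cm).
Qed.

(* Part (1) for the equalizer set {x | f x = g x}: every point of a closed
   set K lies above a minimal point of K, which is in the equalizer set. *)
Lemma upc_equalizer_set (f g : X -> Y) (K : set X) :
  cancel f k -> cancel g k -> closed K ->
  f @` K `<=` upc (g @` K) -> g @` K `<=` upc (f @` K) ->
  upc K = upc (K `&` [set x | f x = g x]).
Proof.
move=> fK gK clK fgK gfK; apply/seteqP; split; last by apply: upcS => x [].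
move=> y [x Kx xy].
have [m [Km mx] m_min] := exists_minimal_below clK Kx.
have fm_gm : f m = g m.
  apply: (co_antisym (co_ax Y)); first exact: minimal_image_le gfK.
  exact: minimal_image_le fgK.
by exists m; [split|exact: (co_trans (co_ax X)) mx xy].
Qed.

End MonotoneRetraction.

(* Part (2) for the equalizer set: part (1) in the order-dual spaces. *)
Lemma downc_equalizer_set (X Y : compOrd) (k : Y -> X) (f g : X -> Y)
    (K : set X) :
  (forall y y', co_le y y' -> co_le (k y) (k y')) ->
  cancel f k -> cancel g k -> closed K ->
  f @` K `<=` downc (g @` K) -> g @` K `<=` downc (f @` K) ->
  downc K = downc (K `&` [set x | f x = g x]).
Proof.
move=> k_mono; apply: (@upc_equalizer_set (dual X) (dual Y)).
by move=> y y' /k_mono.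
Qed.

(* The image of an equalizer h of f and g is the equalizer set: a point x
   with f x = g x is the image of the constant map at x, which factors
   through h. *)
Lemma equalizer_range (X Y E : compOrd) (f g : X -> Y) (h : E -> X) :
  is_equalizer f g h -> range h = [set x | f x = g x].
Proof.
move=> [_ [fgh factor]]; apply/seteqP; split.
  by move=> _ [e _ <-]; exact: (congr1 (@^~ e) fgh).
move=> x fgx.
have cst_mor : co_mor (fun _ : X => x).
  by split; [exact: cst_continuous|move=> *; exact: (co_refl (co_ax X))].
have [v [[_ hv] _]] := factor X _ cst_mor (funext (fun _ => fgx)).
by exists (v x) => //; exact: (congr1 (@^~ x) hv).
Qed.

Unset Implicit Arguments.

Theorem lemma3p22 (X Y E : compOrd) (f g : X -> Y) (k : Y -> X) (h : E -> X)
  (K : set X) :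
  co_mor f -> co_mor g -> co_mor k ->
  k \o f = id -> k \o g = id ->
  is_equalizer f g h ->
  closed K ->
  [/\ upc (f @` K) = upc (g @` K) -> upc K = upc (K `&` range h),
      downc (f @` K) = downc (g @` K) -> downc K = downc (K `&` range h)
    & updownc (f @` K) = updownc (g @` K) ->
      updownc K = updownc (K `&` range h)].
Proof.
move=> _ _ [_ k_mono] kf kg eqh clK; rewrite (equalizer_range eqh).
have fK : cancel f k by move=> x; exact: (congr1 (@^~ x) kf).
have gK : cancel g k by move=> x; exact: (congr1 (@^~ x) kg).
have up_eq := upc_equalizer_set k_mono fK gK clK.
have down_eq := downc_equalizer_set k_mono fK gK clK.
split=> [fgK|fgK|fgK].
- by apply: up_eq; [rewrite -fgK|rewrite fgK]; exact: sub_upc.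
- by apply: down_eq; [rewrite -fgK|rewrite fgK]; exact: sub_downc.
- have [fg_up fg_down] := updownc_eq_sub fgK.
  have [gf_up gf_down] := updownc_eq_sub (esym fgK).
  congr (_ `&` _).
  + exact: (up_eq fg_up gf_up).
  + exact: (down_eq fg_down gf_down).
Qed.
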